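(* For every constant $c>0$ there is a constant $A_c>0$ such that for every $n\ge 2$, every straight-line drawing of the complete graph $K_n$ in the hyperbolic plane with vertex-vertex resolution at least $c$ has angular resolution at most $A_c/n^2$.
   Context: The hyperbolic plane is the complete simply connected Riemannian surface of constant curvature $-1$. A straight-line drawing of a graph in the hyperbolic plane places the vertices at distinct points and draws each edge as the hyperbolic geodesic segment between its endpoints (crossings are allowed). The vertex-vertex resolution is the minimum hyperbolic distance between two distinct vertices; the angular resolution is the minimum angle formed at a vertex between two edges incident to that vertex. *)

From Stdlib Require Export Reals Lra Lia.
Open Scope R_scope.

Definition pt := (R * R * R)%type.

Definition mink (p q : pt) : R :=
  let '(p0, p1, p2) := p in let '(q0, q1, q2) := q in
  - p0 * q0 + p1 * q1 + p2 * q2.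

Definition on_H2 (p : pt) : Prop :=
  mink p p = -1 /\ 0 < fst (fst p).

Definition arcosh (x : R) : R := ln (x + sqrt (x * x - 1)).

Definition hdist (p q : pt) : R := arcosh (- mink p q).

Definition vadd (p q : pt) : pt :=
  let '(p0, p1, p2) := p in let '(q0, q1, q2) := q in (p0 + q0, p1 + q1, p2 + q2).
Definition vscale (a : R) (p : pt) : pt :=
  let '(p0, p1, p2) := p in (a * p0, a * p1, a * p2).

(* Initial tangent vector at p of the geodesic segment from p to q
   (the Minkowski-orthogonal projection of q onto T_p H^2). *)
Definition tangent_to (p q : pt) : pt := vadd q (vscale (mink p q) p).

(* Angle at vertex p between the geodesic segments [p,q] and [p,r]
   (the tangent space T_p H^2 is spacelike, so mink is an inner product there). *)
Definition hangle (p q r : pt) : R :=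
  let u := tangent_to p q in
  let w := tangent_to p r in
  acos (mink u w / sqrt (mink u u * mink w w)).

From Stdlib Require Import Reals Lra Lia List Bool Classical.
Open Scope R_scope.

(* Let p, q be two vertices at maximal distance, and describe every other vertex x by
   a = cosh d(p, x) and by the sine s of the angle at p between the segments towards q
   and x.  Maximality of d(p, q) confines x to a lens, s^2 <= 2 / (a + 1), in which
   1 - cos of the angle at p between two vertices is at most G (s_x - s_y)^2.  Two
   vertices whose values of a lie in a common band [A, mu A) are at distance >= c,
   which forces 1 - cos >= eta / (mu A)^2; so the s-values in a band are about 1/A
   apart within an interval of length about A^(-1/2), and the vertices with a < T
   number O(sqrt T).  If every angle at p exceeds b, the vertices with a >= T have
   s-values b / (2 sqrt G) apart within an interval of length about T^(-1/2), so there
   are O(1 / (b sqrt T)) of them.  For T of order n^2 and b of order 1/n^2 both counts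
   are at most n/4, although n - 1 vertices differ from p. *)

Lemma list_argmax {A : Type} (f : A -> R) (l : list A) :
  l <> nil -> exists m, In m l /\ forall y, In y l -> f y <= f m.
Proof.
  induction l as [|x l IH]; intros Hne; [congruence|]; clear Hne.
  destruct l as [|y l].
  - exists x. split; [now left|]. intros z [<-|[]]; lra.
  - destruct IH as [m [Hm Hmax]]; [discriminate|].
    destruct (Rle_dec (f m) (f x)).
    + exists x. split; [now left|]. intros z [<-|Hz]; [lra|]. specialize (Hmax z Hz); lra.
    + exists m. split; [now right|]. intros z [<-|Hz]; [lra|]. auto.
Qed.

Lemma diametral_pair (n : nat) (f : nat -> nat -> R) : (2 <= n)%nat ->
  exists p q, (p < n)%nat /\ (q < n)%nat /\ p <> q /\
    forall i j, (i < n)%nat -> (j < n)%nat -> i <> j -> f i j <= f p q.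
Proof.
  intros Hn.
  set (P := filter (fun ij => negb (fst ij =? snd ij)%nat) (list_prod (seq 0 n) (seq 0 n))).
  assert (HP : forall i j, In (i, j) P <-> (i < n)%nat /\ (j < n)%nat /\ i <> j).
  { intros i j. unfold P. rewrite filter_In, in_prod_iff, !in_seq, negb_true_iff, Nat.eqb_neq.
    simpl. intuition lia. }
  destruct (list_argmax (fun ij => f (fst ij) (snd ij)) P) as [[p q] [Hpq Hmax]].
  { intros HP0. assert (H01 : In (0, 1)%nat P) by (apply HP; lia).
    rewrite HP0 in H01. destruct H01. }
  apply HP in Hpq as (Hp & Hq & Hpq).
  exists p, q. repeat split; auto.
  intros i j Hi Hj Hij. apply (Hmax (i, j)), HP. auto.
Qed.

Definition Rltb (x y : R) : bool := if Rlt_le_dec x y then true else false.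

Lemma Rltb_true x y : Rltb x y = true <-> x < y.
Proof. unfold Rltb. destruct (Rlt_le_dec x y); split; intros; auto; try discriminate; lra. Qed.

Lemma Rltb_false x y : Rltb x y = false <-> y <= x.
Proof. unfold Rltb. destruct (Rlt_le_dec x y); split; intros; auto; try discriminate; lra. Qed.

Lemma filter_length_le_split {A : Type} (f g : A -> bool) (l : list A) :
  (length (filter f l) <=
     length (filter g l) + length (filter (fun x => negb (g x) && f x) l))%nat.
Proof.
  induction l as [|x l IH]; simpl; [lia|].
  destruct (f x), (g x); simpl; lia.
Qed.

Lemma NoDup_length_le_1 {A : Type} (l : list A) : NoDup l ->
  (forall x y, In x l -> In y l -> x <> y -> False) -> (length l <= 1)%nat.
Proof.
  intros Hl Hxy. destruct l as [|x [|y l]]; simpl; try lia.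
  inversion Hl as [|? ? Hx _]; subst.
  exfalso. apply (Hxy x y); simpl; auto. intros <-. apply Hx. now left.
Qed.

Lemma line_packing (s : nat -> R) (sg : R) (l : list nat) (L w : R) :
  0 < sg -> 0 <= w -> NoDup l ->
  (forall i, In i l -> L <= s i <= L + w) ->
  (forall i j, In i l -> In j l -> i <> j -> sg <= Rabs (s i - s j)) ->
  INR (length l) <= w / sg + 1.
Proof.
  (* At most one value lies in [[L, L + sg)]; the others lie in [[L + sg, L + w]]. *)
  intros Hsg. destruct (INR_unbounded (w / sg)) as [N HN]. revert l L w HN.
  induction N as [|N IH]; intros l L w HN Hw Hl Hin Hsep.
  { simpl in HN. assert (0 <= w / sg) by (apply Rle_mult_inv_pos; lra). lra. }
  set (low := fun i => Rltb (s i) (L + sg)).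
  pose proof (filter_length low l) as Hsplit.
  assert (Hlow : (length (filter low l) <= 1)%nat).
  { apply NoDup_length_le_1; [now apply NoDup_filter|].
    intros i j Hi Hj Hij. apply filter_In in Hi as [Hi Hi']. apply filter_In in Hj as [Hj Hj'].
    apply Rltb_true in Hi', Hj'. specialize (Hsep i j Hi Hj Hij).
    pose proof (Hin i Hi). pose proof (Hin j Hj).
    unfold Rabs in Hsep. destruct (Rcase_abs (s i - s j)); lra. }
  set (high := filter (fun i => negb (low i)) l) in Hsplit.
  assert (Hhigh : forall i, In i high -> L + sg <= s i <= L + w).
  { intros i Hi. apply filter_In in Hi as [Hi Hi']. apply negb_true_iff, Rltb_false in Hi'.
    pose proof (Hin i Hi). lra. }
  apply le_INR in Hlow. rewrite <- Hsplit, plus_INR. simpl in Hlow.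
  destruct (Rlt_le_dec w sg) as [Hsmall|Hbig].
  - destruct high as [|i high'].
    + simpl. assert (0 <= w / sg) by (apply Rle_mult_inv_pos; lra). lra.
    + exfalso. assert (Hi : L + sg <= s i <= L + w) by (apply Hhigh; now left). lra.
  - assert (IHhigh : INR (length high) <= (w - sg) / sg + 1).
    { apply (IH high (L + sg)).
      - rewrite S_INR in HN. replace ((w - sg) / sg) with (w / sg - 1) by (field; lra). lra.
      - lra.
      - now apply NoDup_filter.
      - intros i Hi. apply Hhigh in Hi. lra.
      - intros i j Hi Hj. apply filter_In in Hi, Hj. apply Hsep; tauto. }
    replace ((w - sg) / sg + 1) with (w / sg) in IHhigh by (field; lra). lra.
Qed.

Lemma square_packing (s : nat -> R) (l : list nat) (W2 S2 : R) :
  NoDup l -> 0 <= W2 -> 0 < S2 ->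
  (forall i, In i l -> s i ^ 2 <= W2) ->
  (forall i j, In i l -> In j l -> i <> j -> S2 <= (s i - s j) ^ 2) ->
  INR (length l) <= 2 * sqrt (W2 / S2) + 1.
Proof.
  intros Hl HW HS Hbound Hsep.
  assert (Hsg : 0 < sqrt S2) by now apply sqrt_lt_R0.
  replace (2 * sqrt (W2 / S2)) with (2 * sqrt W2 / sqrt S2)
    by (rewrite sqrt_div_alt by lra; field; lra).
  apply (line_packing s (sqrt S2) l (- sqrt W2) (2 * sqrt W2)); auto.
  - pose proof (sqrt_pos W2). lra.
  - intros i Hi. specialize (Hbound i Hi).
    assert (Habs : Rabs (s i) <= sqrt W2).
    { rewrite <- (sqrt_pow2 (Rabs (s i))) by apply Rabs_pos.
      apply sqrt_le_1_alt. now rewrite pow2_abs. }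
    unfold Rabs in Habs. destruct (Rcase_abs (s i)); lra.
  - intros i j Hi Hj Hij. specialize (Hsep i j Hi Hj Hij).
    rewrite <- (sqrt_pow2 (Rabs _)) by apply Rabs_pos.
    apply sqrt_le_1_alt. now rewrite pow2_abs.
Qed.

Lemma cosh_gt_1 (c : R) : 0 < c -> 1 < cosh c.
Proof.
  intros Hc. unfold cosh. rewrite exp_Ropp.
  assert (HE : 1 < exp c) by (rewrite <- exp_0; apply exp_increasing; lra).
  assert (exp c * / exp c = 1) by (field; lra).
  assert (0 < / exp c) by (apply Rinv_0_lt_compat; lra). nra.
Qed.

Lemma cosh_le_of_le_arcosh (c z : R) : 0 < c -> c <= arcosh z -> cosh c <= z.
Proof.
  intros Hc H. unfold arcosh in H. unfold cosh. rewrite exp_Ropp.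
  set (E := exp c) in *.
  assert (HE : 1 < E) by (unfold E; rewrite <- exp_0; apply exp_increasing; lra).
  assert (HEE : E * / E = 1) by (field; lra).
  assert (HEi : 0 < / E) by (apply Rinv_0_lt_compat; lra).
  set (y := z + sqrt (z * z - 1)) in *.
  (* [ln] is [0] on non-positive arguments, so [c <= ln y] forces [y > 0] *)
  assert (Hy : E <= y).
  { destruct (Rlt_le_dec 0 y) as [Hy|Hy].
    - unfold E. rewrite <- (exp_ln y Hy).
      destruct H as [H|H]; [left; now apply exp_increasing|right; now rewrite H].
    - exfalso. unfold ln in H. destruct (Rlt_dec 0 y); lra. }
  destruct (Rle_dec ((E + / E) / 2) z) as [|Hz]; [auto|exfalso].
  unfold y in Hy. destruct (Rle_dec 0 (z * z - 1)) as [Hz1|Hz1].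
  - pose proof (sqrt_sqrt _ Hz1). pose proof (sqrt_pos (z * z - 1)).
    assert (/ E < 1) by nra.
    assert ((E - z) * (E - z) <= z * z - 1) by nra.
    nra.
  - rewrite sqrt_neg_0 in Hy by lra. nra.
Qed.

Lemma tangent_mink p x y : on_H2 p ->
  mink (tangent_to p x) (tangent_to p y) = mink x y + mink p x * mink p y.
Proof.
  intros [Hp _].
  transitivity (mink x y + 2 * mink p x * mink p y + mink p x * mink p y * mink p p).
  - destruct p as [[p0 p1] p2], x as [[x0 x1] x2], y as [[y0 y1] y2].
    unfold tangent_to, vadd, vscale, mink. ring.
  - rewrite Hp. ring.
Qed.

Lemma hangle_le_PI p q r : hangle p q r <= PI.
Proof. apply acos_bound. Qed.

(* The Lorentz reflection in the hyperplane orthogonal to [p + (1,0,0)]: it is an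
   isometry of the Minkowski form taking [p] to [(1,0,0)], so the spatial part of
   the image of [x] represents the tangent vector at [p] towards [x]. *)
Definition origin_refl (p x : pt) : pt :=
  let w := vadd p (1, 0, 0) in
  vadd (vscale (-1) x) (vscale (2 * mink x w / mink w w) w).

Definition tan1 (p x : pt) : R := snd (fst (origin_refl p x)).
Definition tan2 (p x : pt) : R := snd (origin_refl p x).

Lemma origin_refl_spec p x y : on_H2 p ->
  mink (origin_refl p x) (origin_refl p y) = mink x y
  /\ fst (fst (origin_refl p x)) = - mink p x.
Proof.
  destruct p as [[p0 p1] p2], x as [[x0 x1] x2], y as [[y0 y1] y2].
  unfold on_H2, origin_refl, vadd, vscale, mink; simpl. intros [Hp Hp0].
  assert (Hw : - (p0 + 1) * (p0 + 1) + (p1 + 0) * (p1 + 0) + (p2 + 0) * (p2 + 0)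
               = -2 * (p0 + 1)) by nra.
  split.
  - field. lra.
  - rewrite Hw. field. lra.
Qed.

Lemma tan_dot p x y : on_H2 p ->
  tan1 p x * tan1 p y + tan2 p x * tan2 p y = mink x y + mink p x * mink p y.
Proof.
  intros Hp. destruct (origin_refl_spec p x y Hp) as [Exy Ex].
  destruct (origin_refl_spec p y x Hp) as [_ Ey].
  rewrite <- Exy. unfold tan1, tan2.
  destruct (origin_refl p x) as [[a0 a1] a2], (origin_refl p y) as [[b0 b1] b2].
  simpl in *. replace (mink p x) with (- a0) by lra. replace (mink p y) with (- b0) by lra.
  unfold mink. ring.
Qed.

Definition dir1 (p x : pt) : R := tan1 p x / sqrt (mink p x ^ 2 - 1).
Definition dir2 (p x : pt) : R := tan2 p x / sqrt (mink p x ^ 2 - 1).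

Definition cos_at (p x y : pt) : R := dir1 p x * dir1 p y + dir2 p x * dir2 p y.
Definition sin_at (p x y : pt) : R := dir1 p x * dir2 p y - dir2 p x * dir1 p y.

Lemma sqrt_sq_sub_1_pos (m : R) : 1 < - m -> 0 < sqrt (m ^ 2 - 1).
Proof. intros Hm. apply sqrt_lt_R0. nra. Qed.

Lemma sqrt_sq_sub_1 (m : R) : 1 < - m -> sqrt (m ^ 2 - 1) ^ 2 = m ^ 2 - 1.
Proof. intros Hm. apply pow2_sqrt. nra. Qed.

Lemma cos_at_eq p x y : on_H2 p -> 1 < - mink p x -> 1 < - mink p y ->
  cos_at p x y = (mink x y + mink p x * mink p y)
                 / (sqrt (mink p x ^ 2 - 1) * sqrt (mink p y ^ 2 - 1)).
Proof.
  intros Hp Hx Hy. rewrite <- tan_dot by auto.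
  pose proof (sqrt_sq_sub_1_pos _ Hx). pose proof (sqrt_sq_sub_1_pos _ Hy).
  unfold cos_at, dir1, dir2. field. lra.
Qed.

Lemma dir_unit p x : on_H2 p -> on_H2 x -> 1 < - mink p x ->
  dir1 p x ^ 2 + dir2 p x ^ 2 = 1.
Proof.
  intros Hp [Hx _] Hpx.
  replace (dir1 p x ^ 2 + dir2 p x ^ 2) with (cos_at p x x) by (unfold cos_at; ring).
  rewrite cos_at_eq, Hx, sqrt_sqrt by (auto; nra).
  field. nra.
Qed.

Lemma hangle_eq p x y : on_H2 p -> on_H2 x -> on_H2 y ->
  1 < - mink p x -> 1 < - mink p y -> hangle p x y = acos (cos_at p x y).
Proof.
  intros Hp [Hx _] [Hy _] Hpx Hpy. unfold hangle. cbv zeta.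
  rewrite !tangent_mink, Hx, Hy, cos_at_eq by auto.
  rewrite <- sqrt_mult by nra. do 3 f_equal; ring.
Qed.

Section Rotation.

Variables (p w x y : pt).
Hypotheses (Hp : on_H2 p) (Hw : on_H2 w) (Hpw : 1 < - mink p w).

Lemma cos_sin_at : on_H2 x -> 1 < - mink p x -> cos_at p w x ^ 2 + sin_at p w x ^ 2 = 1.
Proof.
  intros Hx Hpx.
  transitivity ((dir1 p w ^ 2 + dir2 p w ^ 2) * (dir1 p x ^ 2 + dir2 p x ^ 2)).
  - unfold cos_at, sin_at. ring.
  - rewrite !dir_unit by auto. ring.
Qed.

Lemma cos_at_rotate :
  cos_at p x y = cos_at p w x * cos_at p w y + sin_at p w x * sin_at p w y.
Proof.
  transitivity ((dir1 p w ^ 2 + dir2 p w ^ 2) * cos_at p x y).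
  - rewrite dir_unit by auto. ring.
  - unfold cos_at, sin_at. ring.
Qed.

End Rotation.

Lemma cos_at_le_1 p x y : on_H2 p -> on_H2 x -> on_H2 y ->
  1 < - mink p x -> 1 < - mink p y -> -1 <= cos_at p x y <= 1.
Proof.
  intros Hp Hx Hy Hpx Hpy.
  pose proof (cos_sin_at p x y Hp Hx Hpx Hy Hpy). pose proof (pow2_ge_0 (sin_at p x y)). nra.
Qed.

(* [Q / (rq rx)] is the cosine at p of the angle between q and x, where
   [B = cosh d(p, q)], [a = cosh d(p, x)] and [Q >= B (a - 1)] expresses d(q, x) <= d(p, q). *)
Lemma lens_cos (Q rq rx B a : R) : 1 < a -> 1 < B -> 0 < rq -> 0 < rx ->
  rq ^ 2 = B ^ 2 - 1 -> rx ^ 2 = a ^ 2 - 1 -> B * (a - 1) <= Q ->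
  0 <= Q / (rq * rx) /\ (a - 1) / (a + 1) <= (Q / (rq * rx)) ^ 2.
Proof.
  intros Ha HB Hq Hx Eq Ex HQ.
  assert (Hlow : (a - 1) / rx <= Q / (rq * rx)).
  { apply (Rmult_le_reg_l (rq * rx)); [nra|].
    replace (rq * rx * ((a - 1) / rx)) with (rq * (a - 1)) by (field; lra).
    replace (rq * rx * (Q / (rq * rx))) with Q by (field; lra).
    assert (rq < B) by nra. nra. }
  assert (H0 : 0 <= (a - 1) / rx) by (apply Rle_mult_inv_pos; lra).
  split; [lra|].
  replace ((a - 1) / (a + 1)) with (((a - 1) / rx) ^ 2).
  - apply pow_incr. lra.
  - replace (((a - 1) / rx) ^ 2) with ((a - 1) ^ 2 / rx ^ 2) by (field; lra).
    rewrite Ex. field. split; nra.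
Qed.

Section Lens.

Variables (p q x : pt).
Hypotheses (Hp : on_H2 p) (Hq : on_H2 q) (Hx : on_H2 x).
Hypotheses (Hpq : 1 < - mink p q) (Hpx : 1 < - mink p x).
Hypothesis q_far : - mink q x <= - mink p q.

Lemma cos_at_lens :
  0 <= cos_at p q x /\ (- mink p x - 1) / (- mink p x + 1) <= cos_at p q x ^ 2.
Proof.
  rewrite cos_at_eq by auto.
  apply (lens_cos _ _ _ (- mink p q)); auto using sqrt_sq_sub_1_pos, sqrt_sq_sub_1.
  - rewrite sqrt_sq_sub_1 by auto. ring.
  - rewrite sqrt_sq_sub_1 by auto. ring.
  - nra.
Qed.

Lemma sin_at_lens : sin_at p q x ^ 2 <= 2 / (- mink p x + 1).
Proof.
  pose proof (cos_sin_at p q x Hp Hq Hpq Hx Hpx). pose proof cos_at_lens.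
  replace (2 / (- mink p x + 1)) with (1 - (- mink p x - 1) / (- mink p x + 1))
    by (field; lra).
  lra.
Qed.

End Lens.

(* [(cx - cy)(cx + cy) = (sy - sx)(sx + sy)] with [cx + cy] bounded below, so the
   cosines are as close as the sines. *)
Lemma one_sub_dot_le_sin_diff (cx cy sx sy g : R) : 0 < g -> 0 <= cx -> 0 <= cy ->
  cx ^ 2 + sx ^ 2 = 1 -> cy ^ 2 + sy ^ 2 = 1 -> g <= cx ^ 2 -> g <= cy ^ 2 ->
  1 - (cx * cy + sx * sy) <= (/ g + / 2) * (sx - sy) ^ 2.
Proof.
  intros Hg Hcx Hcy Ex Ey Gx Gy.
  assert (Hd : (cx - cy) ^ 2 * (cx + cy) ^ 2 = (sx - sy) ^ 2 * (sx + sy) ^ 2).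
  { transitivity ((cx ^ 2 - cy ^ 2) ^ 2); [ring|].
    replace (cx ^ 2) with (1 - sx ^ 2) by lra. replace (cy ^ 2) with (1 - sy ^ 2) by lra. ring. }
  assert (Hs : (sx + sy) ^ 2 <= 4) by nra.
  assert (Hc : 2 * g <= (cx + cy) ^ 2) by nra.
  assert (Hcc : (cx - cy) ^ 2 * (2 * g) <= 4 * (sx - sy) ^ 2).
  { apply Rle_trans with ((cx - cy) ^ 2 * (cx + cy) ^ 2).
    - apply Rmult_le_compat_l; [apply pow2_ge_0|lra].
    - rewrite Hd, (Rmult_comm 4). apply Rmult_le_compat_l; [apply pow2_ge_0|lra]. }
  replace (1 - (cx * cy + sx * sy)) with (((cx - cy) ^ 2 + (sx - sy) ^ 2) / 2) by nra.
  apply (Rmult_le_reg_l (4 * g)); [lra|].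
  replace (4 * g * (((cx - cy) ^ 2 + (sx - sy) ^ 2) / 2))
    with ((cx - cy) ^ 2 * (2 * g) + 2 * g * (sx - sy) ^ 2) by field.
  replace (4 * g * ((/ g + / 2) * (sx - sy) ^ 2))
    with (4 * (sx - sy) ^ 2 + 2 * g * (sx - sy) ^ 2) by (field; lra).
  lra.
Qed.

Lemma sub1_div_add1_le (K0 a : R) : 1 < K0 -> K0 <= a ->
  (K0 - 1) / (K0 + 1) <= (a - 1) / (a + 1).
Proof.
  intros HK Ha. apply (Rmult_le_reg_r ((K0 + 1) * (a + 1))); [nra|].
  replace ((K0 - 1) / (K0 + 1) * ((K0 + 1) * (a + 1))) with ((K0 - 1) * (a + 1))
    by (field; lra).
  replace ((a - 1) / (a + 1) * ((K0 + 1) * (a + 1))) with ((a - 1) * (K0 + 1))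
    by (field; lra).
  nra.
Qed.

Definition lens_const (K0 : R) : R := (K0 + 1) / (K0 - 1) + / 2.

Lemma lens_const_pos (K0 : R) : 1 < K0 -> 0 < lens_const K0.
Proof.
  intros HK. unfold lens_const.
  assert (0 < (K0 + 1) / (K0 - 1)) by (apply Rdiv_lt_0_compat; lra). lra.
Qed.

Lemma one_sub_cos_at_le (K0 : R) (p q x y : pt) : 1 < K0 ->
  on_H2 p -> on_H2 q -> on_H2 x -> on_H2 y -> 1 < - mink p q ->
  K0 <= - mink p x -> K0 <= - mink p y ->
  - mink q x <= - mink p q -> - mink q y <= - mink p q ->
  1 - cos_at p x y <= lens_const K0 * (sin_at p q x - sin_at p q y) ^ 2.
Proof.
  intros HK Hp Hq Hx Hy Hpq Hpx Hpy Hqx Hqy.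
  destruct (cos_at_lens p q x) as [Cx Lx]; try (auto; lra).
  destruct (cos_at_lens p q y) as [Cy Ly]; try (auto; lra).
  pose proof (sub1_div_add1_le K0 _ HK Hpx). pose proof (sub1_div_add1_le K0 _ HK Hpy).
  replace (lens_const K0) with (/ ((K0 - 1) / (K0 + 1)) + / 2)
    by (unfold lens_const; field; lra).
  rewrite (cos_at_rotate p q x y) by auto.
  apply one_sub_dot_le_sin_diff; try lra.
  - apply Rdiv_lt_0_compat; lra.
  - apply cos_sin_at; auto; lra.
  - apply cos_sin_at; auto; lra.
Qed.

(* For [a = cosh t], [b = cosh u] with [t <= u], [a b - ra rb = cosh (u - t) <= b / a]. *)
Lemma cosh_diff_le_ratio (a b ra rb m : R) : 1 <= a -> a <= b -> b <= m * a ->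
  0 <= ra -> 0 <= rb -> ra ^ 2 = a ^ 2 - 1 -> rb ^ 2 = b ^ 2 - 1 -> a * b - ra * rb <= m.
Proof.
  intros H1 H2 H3 Hra Hrb Ea Eb.
  assert (Hk : b * ra <= a * rb).
  { apply Rsqr_incr_0_var; [|nra]. unfold Rsqr.
    replace (b * ra * (b * ra)) with (b ^ 2 * ra ^ 2) by ring.
    replace (a * rb * (a * rb)) with (a ^ 2 * rb ^ 2) by ring.
    rewrite Ea, Eb. nra. }
  assert (a * (a * b - ra * rb) <= b).
  { replace (a * (a * b - ra * rb)) with (b * ra ^ 2 + b - a * ra * rb) by (rewrite Ea; ring).
    nra. }
  nra.
Qed.

Lemma one_sub_cos_at_band (K0 A : R) (p x y : pt) : 1 < K0 -> 0 < A ->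
  on_H2 p -> 1 < - mink p x -> 1 < - mink p y -> K0 <= - mink x y ->
  A <= - mink p x < (1 + K0) / 2 * A -> A <= - mink p y < (1 + K0) / 2 * A ->
  (K0 - 1) / 2 / ((1 + K0) / 2 * A) ^ 2 <= 1 - cos_at p x y.
Proof.
  intros HK HA Hp Hpx Hpy Hxy Hax Hay.
  set (ax := - mink p x) in *. set (ay := - mink p y) in *.
  set (rx := sqrt (mink p x ^ 2 - 1)). set (ry := sqrt (mink p y ^ 2 - 1)).
  assert (Hrx : 0 < rx /\ rx ^ 2 = ax ^ 2 - 1).
  { split; [apply sqrt_sq_sub_1_pos|unfold rx; rewrite sqrt_sq_sub_1; unfold ax]; auto; ring. }
  assert (Hry : 0 < ry /\ ry ^ 2 = ay ^ 2 - 1).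
  { split; [apply sqrt_sq_sub_1_pos|unfold ry; rewrite sqrt_sq_sub_1; unfold ay]; auto; ring. }
  assert (Hgap : ax * ay - rx * ry <= (1 + K0) / 2).
  { destruct (Rle_dec ax ay).
    - apply cosh_diff_le_ratio; lra || nra.
    - replace (ax * ay - rx * ry) with (ay * ax - ry * rx) by ring.
      apply cosh_diff_le_ratio; lra || nra. }
  assert (Hrr : rx * ry <= ((1 + K0) / 2 * A) ^ 2).
  { assert (rx < ax) by nra. assert (ry < ay) by nra. nra. }
  assert (Hrr0 : 0 < rx * ry) by nra.
  rewrite cos_at_eq by auto. fold rx ry.
  replace (1 - (mink x y + mink p x * mink p y) / (rx * ry))
    with ((rx * ry - ax * ay - mink x y) / (rx * ry)) by (unfold ax, ay; field; lra).
  apply Rle_trans with ((K0 - 1) / 2 / (rx * ry)).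
  - apply Rmult_le_compat_l; [lra|]. apply Rinv_le_contravar; lra.
  - apply Rmult_le_compat_r; [apply Rlt_le, Rinv_0_lt_compat; lra|lra].
Qed.

Lemma cos_le_1_sub_sq_div_4 (x : R) : 0 <= x <= 1 -> cos x <= 1 - x ^ 2 / 4.
Proof.
  intros Hx. pose proof PI2_1.
  destruct (cos_bound x 0 ltac:(lra) ltac:(lra)) as [_ Hc].
  unfold cos_approx, cos_term in Hc. simpl in Hc.
  assert (H1 : x * x <= 1) by nra.
  assert ((x * x) * (x * x) <= x * x) by nra.
  nra.
Qed.

Lemma one_sub_le_of_lt_acos (b z : R) : 0 < b <= 1 -> -1 <= z <= 1 -> b < acos z ->
  b ^ 2 / 4 <= 1 - z.
Proof.
  intros Hb Hz Ha. pose proof PI2_1. pose proof (acos_bound z).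
  assert (z < cos b).
  { destruct (Rlt_le_dec z (cos b)) as [|Hn]; [auto|exfalso].
    assert (acos z <= b) by (apply cos_decr_0; try lra; rewrite cos_acos; lra). lra. }
  pose proof (cos_le_1_sub_sq_div_4 b ltac:(lra)). lra.
Qed.

Lemma one_sub_cos_at_of_lt_hangle (b : R) (p x y : pt) : 0 < b <= 1 ->
  on_H2 p -> on_H2 x -> on_H2 y -> 1 < - mink p x -> 1 < - mink p y ->
  b < hangle p x y -> b ^ 2 / 4 <= 1 - cos_at p x y.
Proof.
  intros Hb Hp Hx Hy Hpx Hpy. rewrite hangle_eq by auto.
  apply one_sub_le_of_lt_acos; auto using cos_at_le_1.
Qed.

Lemma sqrt_le_of_le_sq (x y : R) : 0 <= y -> x <= y ^ 2 -> sqrt x <= y.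
Proof. intros Hy Hx. rewrite <- (sqrt_pow2 y Hy). now apply sqrt_le_1_alt. Qed.

(* In the application, [a i] is cosh d(p, v i), [s i] the sine of the angle at p
   between v q and v i, and [d i j] one minus the cosine of the angle at p between
   v i and v j. *)
Section Counting.

Variables (K0 mu eta G : R) (l : list nat) (a s : nat -> R) (d : nat -> nat -> R).
Hypotheses (K0_pos : 0 < K0) (mu_gt_1 : 1 < mu) (eta_pos : 0 < eta) (G_pos : 0 < G).
Hypothesis l_uniq : NoDup l.
Hypothesis a_ge : forall i, In i l -> K0 <= a i.
Hypothesis s_sq_le : forall i, In i l -> s i ^ 2 <= 2 / (a i + 1).
Hypothesis d_le : forall i j, In i l -> In j l -> i <> j -> d i j <= G * (s i - s j) ^ 2.
Hypothesis d_band : forall A i j, 0 < A -> In i l -> In j l -> i <> j ->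
  A <= a i < mu * A -> A <= a j < mu * A -> eta / (mu * A) ^ 2 <= d i j.

Lemma filter_count (f : nat -> bool) (W2 D : R) : 0 <= W2 -> 0 < D ->
  (forall i, In i l -> f i = true -> s i ^ 2 <= W2) ->
  (forall i j, In i l -> In j l -> f i = true -> f j = true -> i <> j -> D <= d i j) ->
  INR (length (filter f l)) <= 2 * sqrt (W2 * G / D) + 1.
Proof.
  intros HW HD Hs Hd.
  replace (W2 * G / D) with (W2 / (D / G)) by (field; lra).
  apply (square_packing s); auto.
  - now apply NoDup_filter.
  - now apply Rdiv_lt_0_compat.
  - intros i Hi. apply filter_In in Hi. apply Hs; tauto.
  - intros i j Hi Hj Hij. apply filter_In in Hi, Hj.
    pose proof (Hd i j (proj1 Hi) (proj1 Hj) (proj2 Hi) (proj2 Hj) Hij).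
    pose proof (d_le i j (proj1 Hi) (proj1 Hj) Hij).
    apply (Rmult_le_reg_l G); auto.
    replace (G * (D / G)) with D by (field; lra). lra.
Qed.

Definition rho : R := sqrt mu.
Definition band_const : R := 2 * mu * sqrt (2 * G * K0 / eta).
Definition below_const : R := (band_const + 1) / (rho - 1).
Definition below (T : R) : list nat := filter (fun i => Rltb (a i) T) l.

Lemma rho_gt_1 : 1 < rho.
Proof. unfold rho. rewrite <- sqrt_1. apply sqrt_lt_1; lra. Qed.

Lemma below_const_pos : 0 < below_const.
Proof.
  pose proof rho_gt_1. pose proof (sqrt_pos (2 * G * K0 / eta)).
  unfold below_const, band_const. apply Rdiv_lt_0_compat; nra.
Qed.

Lemma band_count (k : nat) (f : nat -> bool) :
  (forall i, In i l -> f i = true -> K0 * mu ^ k <= a i < mu * (K0 * mu ^ k)) ->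
  INR (length (filter f l)) <= band_const * rho ^ k + 1.
Proof.
  intros Hband. set (A := K0 * mu ^ k) in *.
  assert (HA : 0 < A) by (apply Rmult_lt_0_compat; [lra|apply pow_lt; lra]).
  assert (HmuA : 0 < (mu * A) ^ 2) by (apply pow_lt; nra).
  eapply Rle_trans.
  - apply (filter_count f (2 / A) (eta / (mu * A) ^ 2)).
    + apply Rle_mult_inv_pos; lra.
    + now apply Rdiv_lt_0_compat.
    + intros i Hi Hf. destruct (Hband i Hi Hf).
      eapply Rle_trans; [now apply s_sq_le|].
      apply Rmult_le_compat_l; [lra|]. apply Rinv_le_contravar; lra.
    + intros i j Hi Hj Hfi Hfj Hij. now apply d_band; auto.
  - apply Rplus_le_compat_r.
    assert (Hr : 0 <= rho ^ k) by (apply pow_le; pose proof rho_gt_1; lra).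
    assert (Hc : 0 <= band_const)
      by (unfold band_const; pose proof (sqrt_pos (2 * G * K0 / eta)); nra).
    assert (sqrt (2 / A * G / (eta / (mu * A) ^ 2)) <= band_const * rho ^ k / 2); [|lra].
    apply sqrt_le_of_le_sq; [apply Rle_mult_inv_pos; [nra|lra]|].
    right. unfold band_const, A.
    replace ((2 * mu * sqrt (2 * G * K0 / eta) * rho ^ k / 2) ^ 2)
      with (mu ^ 2 * sqrt (2 * G * K0 / eta) ^ 2 * (rho ^ 2) ^ k)
      by (rewrite <- pow_mult, Nat.mul_comm, pow_mult; field).
    unfold rho. rewrite !pow2_sqrt by (try apply Rle_mult_inv_pos; nra).
    field. split; [lra|]. split; [apply pow_nonzero; lra|lra].
Qed.

Lemma below_count (k : nat) : INR (length (below (K0 * mu ^ k))) <= below_const * rho ^ k.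
Proof.
  pose proof rho_gt_1 as Hr.
  assert (Hc : 0 <= below_const) by (left; apply below_const_pos).
  induction k as [|k IH].
  - unfold below. rewrite (filter_ext_in _ (fun _ => false)), filter_false; [simpl; lra|].
    intros i Hi. apply Rltb_false. simpl. rewrite Rmult_1_r. now apply a_ge.
  - pose proof (filter_length_le_split (fun i => Rltb (a i) (K0 * mu ^ S k))
                  (fun i => Rltb (a i) (K0 * mu ^ k)) l) as Hsplit.
    apply le_INR in Hsplit. rewrite plus_INR in Hsplit.
    assert (Hband : INR (length (filter (fun i => negb (Rltb (a i) (K0 * mu ^ k))
                                   && Rltb (a i) (K0 * mu ^ S k)) l))
                    <= band_const * rho ^ k + 1).
    { apply band_count. intros i _ Hi.
      apply andb_true_iff in Hi as [H1 H2].
      apply negb_true_iff, Rltb_false in H1. apply Rltb_true in H2. simpl in H2. lra. }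
    assert (Hgeom : below_const * rho ^ k + (band_const * rho ^ k + 1)
                    <= below_const * rho ^ S k).
    { assert (1 <= rho ^ k) by (apply pow_R1_Rle; lra).
      replace (below_const * rho ^ S k) with (below_const * rho ^ k + (band_const + 1) * rho ^ k)
        by (unfold below_const; simpl; field; lra).
      nra. }
    unfold below in *. lra.
Qed.

Lemma count_le (k : nat) (b : R) : 0 < b ->
  (forall i j, In i l -> In j l -> i <> j -> b ^ 2 / 4 <= d i j) ->
  INR (length l) <= below_const * rho ^ k + 2 * sqrt (8 * G / (K0 * mu ^ k * b ^ 2)) + 1.
Proof.
  intros Hb Hfar. set (T := K0 * mu ^ k).
  assert (HT : 0 < T) by (apply Rmult_lt_0_compat; [lra|apply pow_lt; lra]).
  pose proof (below_count k) as Hnear. fold T in Hnear.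
  pose proof (filter_length (fun i => Rltb (a i) T) l) as Hsplit.
  assert (Hfarc : INR (length (filter (fun i => negb (Rltb (a i) T)) l))
                  <= 2 * sqrt (2 / T * G / (b ^ 2 / 4)) + 1).
  { apply filter_count.
    - apply Rle_mult_inv_pos; lra.
    - nra.
    - intros i Hi Hf. apply negb_true_iff, Rltb_false in Hf.
      eapply Rle_trans; [now apply s_sq_le|].
      apply Rmult_le_compat_l; [lra|]. apply Rinv_le_contravar; lra.
    - intros i j Hi Hj _ _. now apply Hfar. }
  replace (2 / T * G / (b ^ 2 / 4)) with (8 * G / (T * b ^ 2)) in Hfarc by (field; lra).
  rewrite <- Hsplit, plus_INR. unfold below in Hnear. lra.
Qed.

End Counting.

Lemma le_of_pow2_le (x y : R) : 0 <= y -> x ^ 2 <= y ^ 2 -> x <= y.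
Proof. intros Hy H. destruct (Rle_dec x y); [auto|nra]. Qed.

Lemma geometric_bracket (K0 m X : R) : 0 < K0 -> 1 < m -> K0 <= X ->
  exists k, X <= K0 * m ^ k <= m * X.
Proof.
  intros HK Hm HX.
  destruct (Pow_x_infinity m ltac:(rewrite Rabs_right; lra) (X / K0)) as [N HN].
  specialize (HN N (Nat.le_refl N)).
  rewrite Rabs_right in HN by (apply Rle_ge, pow_le; lra).
  assert (HXN : X <= K0 * m ^ N).
  { apply (Rmult_le_reg_l (/ K0)); [now apply Rinv_0_lt_compat|].
    replace (/ K0 * (K0 * m ^ N)) with (m ^ N) by (field; lra). unfold Rdiv in HN. lra. }
  clear HN. induction N as [|N IH].
  - exists 0%nat. simpl in *. nra.
  - destruct (Rle_dec X (K0 * m ^ N)) as [H|H]; [now apply IH|].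
    exists (S N). split; [auto|]. simpl. nra.
Qed.

Lemma below_term_le (K0 mu C x : R) (k : nat) : 0 < K0 -> 1 < mu -> 0 < C -> 0 <= x ->
  K0 * mu ^ k <= mu * (K0 / (16 * C ^ 2 * mu) * x ^ 2) -> C * rho mu ^ k <= x / 4.
Proof.
  intros HK Hmu HC Hx HT. apply le_of_pow2_le; [lra|].
  replace ((C * rho mu ^ k) ^ 2) with (C ^ 2 * mu ^ k)
    by (unfold rho; rewrite Rpow_mult_distr, <- pow_mult, Nat.mul_comm, pow_mult, pow2_sqrt by lra;
        reflexivity).
  assert (HC2 : 0 < C ^ 2) by (apply pow_lt; lra).
  replace (mu * (K0 / (16 * C ^ 2 * mu) * x ^ 2)) with (K0 * (x ^ 2 / (16 * C ^ 2))) in HT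
    by (field; lra).
  apply Rmult_le_reg_l in HT; [|lra].
  apply (Rmult_le_compat_l (C ^ 2)) in HT; [|lra].
  replace (C ^ 2 * (x ^ 2 / (16 * C ^ 2))) with ((x / 4) ^ 2) in HT by (field; lra).
  exact HT.
Qed.

Lemma far_term_le (G L M x T : R) : 0 < G -> 0 < L -> 0 < M -> 0 < x ->
  512 * G <= L * M ^ 2 -> L * x ^ 2 <= T ->
  2 * sqrt (8 * G / (T * (M / x ^ 2) ^ 2)) <= x / 4.
Proof.
  intros HG HL HM Hx HLM HT.
  assert (HT0 : 0 < T) by (assert (0 < x ^ 2) by (apply pow_lt; lra); nra).
  assert (sqrt (8 * G / (T * (M / x ^ 2) ^ 2)) <= x / 8); [|lra].
  apply sqrt_le_of_le_sq; [lra|].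
  replace (8 * G / (T * (M / x ^ 2) ^ 2)) with (x ^ 2 * (8 * G * x ^ 2 / (T * M ^ 2)))
    by (field; lra).
  replace ((x / 8) ^ 2) with (x ^ 2 * / 64) by field.
  apply Rmult_le_compat_l; [nra|].
  apply (Rmult_le_reg_r (T * M ^ 2)); [nra|].
  replace (8 * G * x ^ 2 / (T * M ^ 2) * (T * M ^ 2)) with (8 * G * x ^ 2) by (field; nra).
  assert (L * x ^ 2 * M ^ 2 <= T * M ^ 2) by (apply Rmult_le_compat_r; nra).
  assert (512 * G * x ^ 2 <= L * M ^ 2 * x ^ 2) by (apply Rmult_le_compat_r; nra).
  lra.
Qed.

Definition others (n p : nat) : list nat := filter (fun i => negb (i =? p)%nat) (seq 0 n).

Lemma in_others n p i : In i (others n p) <-> (i < n)%nat /\ i <> p.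
Proof. unfold others. rewrite filter_In, in_seq, negb_true_iff, Nat.eqb_neq. intuition lia. Qed.

Lemma others_length n p : (p < n)%nat -> INR n - 1 <= INR (length (others n p)).
Proof.
  intros Hp. assert (H : (n <= S (length (others n p)))%nat).
  { change (S (length (others n p))) with (length (p :: others n p)).
    rewrite <- (length_seq n 0) at 1. apply NoDup_incl_length; [apply seq_NoDup|].
    intros i Hi. apply in_seq in Hi. destruct (Nat.eq_dec i p) as [->|Hip]; [now left|].
    right. apply in_others. lia. }
  apply le_INR in H. rewrite S_INR in H. lra.
Qed.

(* For n^2 > threshold K0, the vertices at cosh-distance below about scale K0 * n^2 from
   the diametral vertex number at most n/4, and so do the vertices beyond it when all
   angles exceed threshold K0 / n^2. *)
Definition scale (K0 : R) : R :=
  K0 / (16 * below_const K0 ((1 + K0) / 2) ((K0 - 1) / 2) (lens_const K0) ^ 2 * ((1 + K0) / 2)).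

Definition threshold (K0 : R) : R := (512 * lens_const K0 + K0) / scale K0 + 25.

Lemma scale_pos (K0 : R) : 1 < K0 -> 0 < scale K0.
Proof.
  intros HK. unfold scale.
  set (C := below_const K0 ((1 + K0) / 2) ((K0 - 1) / 2) (lens_const K0)).
  assert (0 < C ^ 2) by (apply pow_lt, below_const_pos; lra).
  apply Rdiv_lt_0_compat; nra.
Qed.

Lemma threshold_bounds (K0 : R) : 1 < K0 ->
  25 <= threshold K0 /\ K0 <= scale K0 * threshold K0
  /\ 512 * lens_const K0 <= scale K0 * threshold K0 ^ 2.
Proof.
  intros HK. pose proof (scale_pos K0 HK). pose proof (lens_const_pos K0 HK).
  assert (Hq : scale K0 * ((512 * lens_const K0 + K0) / scale K0) = 512 * lens_const K0 + K0)
    by (field; lra).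
  assert (0 <= (512 * lens_const K0 + K0) / scale K0) by (apply Rle_mult_inv_pos; lra).
  unfold threshold. repeat split; nra.
Qed.

Section Diametral.

Variables (K0 : R) (n : nat) (v : nat -> pt) (p q : nat).
Hypothesis K0_gt_1 : 1 < K0.
Hypothesis v_on_H2 : forall i, (i < n)%nat -> on_H2 (v i).
Hypothesis v_sep : forall i j, (i < n)%nat -> (j < n)%nat -> i <> j -> K0 <= - mink (v i) (v j).
Hypotheses (p_lt : (p < n)%nat) (q_lt : (q < n)%nat) (p_neq_q : p <> q).
Hypothesis pq_diam : forall i j, (i < n)%nat -> (j < n)%nat -> i <> j ->
  - mink (v i) (v j) <= - mink (v p) (v q).

Lemma vertex_count_bound (k : nat) (b : R) : 0 < b <= 1 ->
  (forall i j, In i (others n p) -> In j (others n p) -> i <> j -> b < hangle (v p) (v i) (v j)) ->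
  INR n - 1 <=
    below_const K0 ((1 + K0) / 2) ((K0 - 1) / 2) (lens_const K0) * rho ((1 + K0) / 2) ^ k
    + 2 * sqrt (8 * lens_const K0 / (K0 * ((1 + K0) / 2) ^ k * b ^ 2)) + 1.
Proof.
  intros Hb Hangle.
  assert (Hon : forall i, In i (others n p) -> on_H2 (v i)).
  { intros i Hi. apply in_others in Hi. apply v_on_H2. tauto. }
  assert (Ha : forall i, In i (others n p) -> K0 <= - mink (v p) (v i)).
  { intros i Hi. apply in_others in Hi as [Hi Hip]. apply v_sep; auto. }
  assert (Hp : on_H2 (v p)) by auto.
  assert (Hq : on_H2 (v q)) by auto.
  assert (Hpq : 1 < - mink (v p) (v q)) by (pose proof (v_sep p q p_lt q_lt p_neq_q); lra).
  assert (Hfar : forall i, In i (others n p) -> - mink (v q) (v i) <= - mink (v p) (v q)).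
  { intros i Hi. apply in_others in Hi as [Hi Hip].
    destruct (Nat.eq_dec i q) as [->|Hiq]; [|now apply pq_diam].
    destruct Hq as [Hqq _]. rewrite Hqq. lra. }
  apply (Rle_trans _ _ _ (others_length n p p_lt)).
  apply (count_le K0 _ _ (lens_const K0) (others n p) (fun i => - mink (v p) (v i))
           (fun i => sin_at (v p) (v q) (v i)) (fun i j => 1 - cos_at (v p) (v i) (v j)));
    try lra.
  - now apply lens_const_pos.
  - apply NoDup_filter, seq_NoDup.
  - exact Ha.
  - intros i Hi. pose proof (Ha i Hi). apply sin_at_lens; auto; lra.
  - intros i j Hi Hj _. apply one_sub_cos_at_le; auto.
  - intros A i j HA Hi Hj Hij HAi HAj. pose proof (Ha i Hi). pose proof (Ha j Hj).
    apply one_sub_cos_at_band; auto; try lra.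
    apply in_others in Hi, Hj. apply v_sep; tauto.
  - intros i j Hi Hj Hij. pose proof (Ha i Hi). pose proof (Ha j Hj).
    apply one_sub_cos_at_of_lt_hangle; auto; lra.
Qed.

Lemma wide_angles_absurd : threshold K0 < INR n ^ 2 ->
  (forall i j, In i (others n p) -> In j (others n p) -> i <> j ->
     threshold K0 / INR n ^ 2 < hangle (v p) (v i) (v j)) ->
  False.
Proof.
  intros Hn Hangle.
  destruct (threshold_bounds K0 K0_gt_1) as (H25 & HK & HG).
  pose proof (scale_pos K0 K0_gt_1) as HL.
  assert (HC : 0 < below_const K0 ((1 + K0) / 2) ((K0 - 1) / 2) (lens_const K0))
    by (apply below_const_pos; lra).
  pose proof (lens_const_pos K0 K0_gt_1) as HG0.
  pose proof (pos_INR n) as Hx0.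
  set (x := INR n) in *. set (M := threshold K0) in *. set (L := scale K0) in *.
  assert (Hx : 5 < x) by nra.
  assert (Hb : 0 < M / x ^ 2 <= 1).
  { split; [apply Rdiv_lt_0_compat; nra|].
    apply (Rmult_le_reg_r (x ^ 2)); [nra|]. field_simplify; nra. }
  destruct (geometric_bracket K0 ((1 + K0) / 2) (L * x ^ 2)) as [k [Hk1 Hk2]]; try nra.
  pose proof (vertex_count_bound k (M / x ^ 2) Hb) as Hcount.
  pose proof (below_term_le K0 ((1 + K0) / 2) _ x k ltac:(lra) ltac:(lra) HC ltac:(lra) Hk2).
  pose proof (far_term_le (lens_const K0) L M x (K0 * ((1 + K0) / 2) ^ k) HG0 HL
                ltac:(lra) ltac:(lra) HG Hk1).
  specialize (Hcount Hangle). fold x in Hcount. lra.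
Qed.

End Diametral.

Theorem theorem6 :
  forall c : R, 0 < c ->
  exists A : R, 0 < A /\
    forall (n : nat) (v : nat -> pt),
      (2 <= n)%nat ->
      (forall i, (i < n)%nat -> on_H2 (v i)) ->
      (forall i j, (i < n)%nat -> (j < n)%nat -> i <> j -> v i <> v j) ->
      (forall i j, (i < n)%nat -> (j < n)%nat -> i <> j -> c <= hdist (v i) (v j)) ->
      (3 <= n)%nat ->
      exists i j k : nat,
        (i < n)%nat /\ (j < n)%nat /\ (k < n)%nat /\
        i <> j /\ i <> k /\ j <> k /\
        hangle (v i) (v j) (v k) <= A / (INR n ^ 2).
Proof.
  intros c Hc.
  pose proof (cosh_gt_1 c Hc) as HK0. set (K0 := cosh c) in *.
  destruct (threshold_bounds K0 HK0) as [H25 _]. pose proof PI_RGT_0.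
  exists (PI * threshold K0). split; [nra|].
  intros n v Hn2 Hv _ Hdist Hn3.
  assert (Hsep : forall i j, (i < n)%nat -> (j < n)%nat -> i <> j -> K0 <= - mink (v i) (v j))
    by (intros i j Hi Hj Hij; apply cosh_le_of_le_arcosh, Hdist; auto).
  assert (Hn : 0 < INR n ^ 2) by (apply pow_lt, lt_0_INR; lia).
  assert (Hbound : threshold K0 / INR n ^ 2 <= PI * threshold K0 / INR n ^ 2).
  { unfold Rdiv. apply Rmult_le_compat_r; [left; now apply Rinv_0_lt_compat|].
    pose proof PI2_1. nra. }
  destruct (Rle_lt_dec (INR n ^ 2) (threshold K0)) as [Hsmall|Hbig].
  - exists 0%nat, 1%nat, 2%nat. repeat split; try lia.
    apply (Rle_trans _ PI); [apply hangle_le_PI|].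
    apply (Rmult_le_reg_r (INR n ^ 2)); auto. field_simplify; nra.
  - apply NNPP. intros Hno.
    destruct (diametral_pair n (fun i j => - mink (v i) (v j)) Hn2)
      as (p & q & Hp & Hq & Hpq & Hdiam).
    apply (wide_angles_absurd K0 n v p q); auto.
    intros i j Hi Hj Hij. apply in_others in Hi, Hj.
    apply Rnot_le_lt. intros Hle. apply Hno.
    exists p, i, j. repeat split; try tauto; try lia. lra.
Qed.
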